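(* Let $h<k\leq d$ be integers with $h\geq 0$, and assume $\dim(S^kV\otimes S^{d-k}V)\leq\dim(S^hV\otimes S^{d-h}V)$. Then the linear map $\eta^{k-h}:S^kV\otimes S^{d-k}V\to S^hV\otimes S^{d-h}V$, $\eta^{k-h}=\sum_{|I|=k-h}\binom{k-h}{I}\partial^I\otimes x^I$, is injective.
   Context: $V\cong\mathbb{C}^{n+1}$ and $S^iV$ is identified with the space of homogeneous polynomials of degree $i$ in $x_0,\dots,x_n$. For a multi-index $I=(i_0,\dots,i_n)$, $|I|=\sum i_j$, $\binom{m}{I}=m!/(i_0!\cdots i_n!)$, $x^I=\prod x_j^{i_j}$, $\partial^I=\prod\partial_{x_j}^{i_j}$. The operator $\partial^I\otimes x^I$ acts on $p\otimes q\in S^kV\otimes S^{d-k}V$ by $p\otimes q\mapsto \partial^I p\otimes x^I q$. *)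

From HB Require Import structures.
From mathcomp Require Import all_boot all_order all_algebra.
From mathcomp Require Import mpoly.
From mathcomp Require Import complex.
From mathcomp Require Import reals.
Set Implicit Arguments. Unset Strict Implicit. Unset Printing Implicit Defensive.
Import Order.TTheory GRing.Theory Num.Theory.
Local Open Scope ring_scope.

(* Model of S^a V (x) S^b V, V = C^(n+1):  polynomials in 2(n+1) variables
   x_0..x_n (indices lshift) and y_0..y_n (indices rshift), bihomogeneous of
   bidegree (a,b).  p (x) q  corresponds to  p(x) * q(y). *)

Definition nvars (n : nat) := (n.+1 + n.+1)%N.

Definition xmon n (I : 'X_{1..n.+1}) : 'X_{1..nvars n} :=
  [multinom (match split i with inl j => I j | inr _ => 0%N end) | i < nvars n].
Definition ymon n (I : 'X_{1..n.+1}) : 'X_{1..nvars n} :=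
  [multinom (match split i with inl _ => 0%N | inr j => I j end) | i < nvars n].

Definition xdeg n (m : 'X_{1..nvars n}) : nat := (\sum_(j < n.+1) m (lshift n.+1 j))%N.
Definition ydeg n (m : 'X_{1..nvars n}) : nat := (\sum_(j < n.+1) m (rshift n.+1 j))%N.

Definition in_tensor (C : nzRingType) n (a b : nat) (F : {mpoly C[nvars n]}) : bool :=
  all (fun m => (xdeg m == a) && (ydeg m == b)) (msupp F).

Definition multinomial n (e : nat) (I : 'X_{1..n.+1}) : nat :=
  (e`! %/ \prod_(j < n.+1) (I j)`!)%N.

(* eta^e = sum_{|I| = e} binom(e,I) d^I (x) x^I : the operator d_x^I is applied
   to the first tensor factor and multiplication by x^I (here y^I) to the second. *)
Definition eta_op (C : nzRingType) n (e : nat) (F : {mpoly C[nvars n]}) : {mpoly C[nvars n]} :=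
  \sum_(I : 'X_{1..n.+1 < e.+1} | mdeg I == e)
     (multinomial e I)%:R *: ('X_[ymon I] * mderivm (xmon I) F).

(* Write L = Σ_j y_j ∂/∂x_j and L* = Σ_j x_j ∂/∂y_j.  By the multinomial theorem
   η^e = L^e.  Together with the Euler operators they satisfy the sl_2 relations,
   so on a vector v of bidegree (a, b) one has
     L* L^(j+1) v = L^(j+1) L* v + (j+1)(a - b - j) L^j v.
   Hence L^(e+1) v = 0 forces L^(e+2) (L* v) = 0, where L* v has bidegree
   (a+1, b-1); induction on b (L* v = 0 when b = 0) then shows that L^e is
   injective in bidegree (a, b) as soon as b + e <= a.  When dim V >= 2, the
   dimension of S^j V ⊗ S^(d-j) V strictly increases for 2j <= d, so the
   dimension hypothesis forces d <= k + h, i.e. (d - k) + (k - h) <= k.  When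
   dim V = 1, L^e is visibly injective on the line spanned by x^k y^(d-k). *)

From HB Require Import structures.
From mathcomp Require Import all_boot all_order all_algebra.
From mathcomp Require Import mpoly.
From mathcomp Require Import complex.
From mathcomp Require Import reals.
From mathcomp Require Import ring zify.
Import Order.TTheory GRing.Theory Num.Theory ComplexField.

Set Implicit Arguments.
Unset Strict Implicit.
Unset Printing Implicit Defensive.

Lemma mulSn_bin_addn n j : (n + j).+1 * 'C(n + j, n) = j.+1 * 'C(n + j.+1, n).
Proof. by have := mul_bin_down (n + j).+1 n; rewrite /= -addnS addKn addnS. Qed.

Definition bidim n d j := 'C(n + j, n) * 'C(n + (d - j), n).

Lemma bidim_sym n d j : j <= d -> bidim n d (d - j) = bidim n d j.
Proof. by move=> le_jd; rewrite /bidim subKn // mulnC. Qed.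

Lemma bidim_ltS n d j : 0 < n -> j.+2 + j <= d -> bidim n d j < bidim n d j.+1.
Proof.
move=> n_gt0 le_jd; rewrite /bidim.
set t := d - j.+1.
have -> : d - j = t.+1 by rewrite /t; lia.
have lt_jt : j < t by rewrite /t; lia.
set A := 'C(n + j, n); set X := 'C(n + j.+1, n).
set B := 'C(n + t, n); set Y := 'C(n + t.+1, n).
have eA := mulSn_bin_addn n j; have eB := mulSn_bin_addn n t.
rewrite -/A -/X -/B -/Y in eA eB.
have A_gt0 : 0 < A by rewrite bin_gt0 leq_addr.
have B_gt0 : 0 < B by rewrite bin_gt0 leq_addr.
rewrite -(ltn_pmul2l (_ : 0 < j.+1 * t.+1)) //.
rewrite [X in X < _]mulnACA -eB [X in _ < X]mulnACA -eA.
rewrite [X in X < _]mulnACA [X in _ < X]mulnACA ltn_pmul2r ?muln_gt0 ?A_gt0 //.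
(* The ratio of consecutive terms is (n+j+1)(t+1) / ((j+1)(n+t+1)) with j < t. *)
nia.
Qed.

Lemma bidim_lt n d h m : 0 < n -> h < m -> m + m <= d -> bidim n d h < bidim n d m.
Proof.
move=> n_gt0; elim: m => [//|m IHm]; rewrite ltnS leq_eqVlt => /predU1P[-> | lt_hm] le_md.
  by apply: bidim_ltS; lia.
by apply: ltn_trans (IHm lt_hm _) (bidim_ltS n_gt0 _); lia.
Qed.

Lemma bidim_le_bound n h k d : 0 < n -> h < k -> k <= d ->
  bidim n d k <= bidim n d h -> d <= k + h.
Proof.
move=> n_gt0 lt_hk le_kd; apply: contraTT; rewrite -!ltnNge => lt_d.
have [le_k | lt_k] := leqP k (d - k); first by apply: bidim_lt; lia.
by rewrite -(bidim_sym _ le_kd); apply: bidim_lt; lia.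
Qed.

Local Open Scope ring_scope.

Lemma sum_eq_inj_scale (R : nzRingType) (V : lmodType R) (T : finType) (U : eqType)
  (f : T -> U) (t : T) (A : T -> V) :
  injective f -> \sum_u (f u == f t)%:R *: A u = A t.
Proof.
move=> f_inj; rewrite (bigD1 t) //= eqxx scale1r big1 ?addr0 // => u ne_ut.
by rewrite (inj_eq f_inj) (negbTE ne_ut) scale0r.
Qed.

Lemma sum_eq_inj_scale_sym (R : nzRingType) (V : lmodType R) (T : finType) (U : eqType)
  (f : T -> U) (t : T) (A : T -> V) :
  injective f -> \sum_u (f t == f u)%:R *: A u = A t.
Proof. by move=> f_inj; under eq_bigr do rewrite eq_sym; apply: sum_eq_inj_scale. Qed.

Section IterAdditive.
Variables (V : zmodType) (f : {additive V -> V}).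

Lemma iter_raddf0 j : iter j f 0 = 0.
Proof. by elim: j => //= j ->; rewrite raddf0. Qed.

Lemma iter_raddfB j : {morph iter j f : u v / u - v}.
Proof. by move=> u v; elim: j => //= j ->; rewrite raddfB. Qed.
End IterAdditive.

Section Polarization.
Variables (R : comNzRingType) (N k : nat).
Implicit Types (p q r s : 'I_k -> 'I_N) (F : {mpoly R[N]}).

Definition polar p q F : {mpoly R[N]} := \sum_(i < k) 'X_(p i) * mderiv (q i) F.

Lemma polar_is_linear p q : linear (polar p q).
Proof.
move=> c F G; rewrite /polar scaler_sumr -big_split /=; apply: eq_bigr => i _.
by rewrite mderivD mderivZ mulrDr scalerAr.
Qed.

HB.instance Definition _ p q :=
  GRing.isLinear.Build R {mpoly R[N]} {mpoly R[N]} _ (polar p q) (polar_is_linear p q).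

Lemma mderivXM (a b : 'I_N) F :
  mderiv a ('X_b * F) = (b == a)%:R *: F + 'X_b * mderiv a F.
Proof.
rewrite mderivM mderivX mnm1E; congr (_ + _).
case: eqP => [->|_]; last by rewrite scale0r mul0r scale0r.
by rewrite -[X in (X - _)%MM]add0m addmK mpolyX0 scale1r mul1r scale1r.
Qed.

Lemma polar_commutator p q r s F :
  polar p q (polar r s F) - polar r s (polar p q F) =
  \sum_(i < k) \sum_(j < k) ((r j == q i)%:R *: ('X_(p i) * mderiv (s j) F)
     - (p i == s j)%:R *: ('X_(r j) * mderiv (q i) F)).
Proof.
pose G i j := 'X_(p i) * ('X_(r j) * mderiv (q i) (mderiv (s j) F)).
have -> : polar p q (polar r s F) = \sum_(i < k) \sum_(j < k)
    ((r j == q i)%:R *: ('X_(p i) * mderiv (s j) F) + G i j).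
  rewrite /polar; apply: eq_bigr => i _.
  rewrite raddf_sum /= mulr_sumr; apply: eq_bigr => j _.
  by rewrite mderivXM mulrDr scalerAr.
have -> : polar r s (polar p q F) = \sum_(i < k) \sum_(j < k)
    ((p i == s j)%:R *: ('X_(r j) * mderiv (q i) F) + G i j).
  rewrite /polar exchange_big; apply: eq_bigr => j _.
  rewrite raddf_sum /= mulr_sumr; apply: eq_bigr => i _.
  by rewrite mderivXM mulrDr scalerAr mulrCA mderiv_comm.
rewrite -sumrB; apply: eq_bigr => i _; rewrite -sumrB; apply: eq_bigr => j _.
by rewrite opprD addrACA subrr addr0.
Qed.

Lemma mcoeff_polar_diag p F m :
  (polar p p F)@_m = (\sum_(i < k) m (p i))%:R * F@_m.
Proof.
have polar_mon u : polar p p 'X_[u] = (\sum_(i < k) u (p i))%:R *: 'X_[u].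
  rewrite /polar natr_sum scaler_suml; apply: eq_bigr => i _.
  rewrite mderivX -scalerAr -mpolyXD.
  have [->|upi_neq0] := eqVneq (u (p i)) 0%N; first by rewrite !scale0r.
  by rewrite addmC submK // lep1mP.
rewrite {1}(mpolyE F) [polar _ _ _]linear_sum raddf_sum /=.
under eq_bigr => u _ do rewrite linearZ /= polar_mon scalerA mcoeffZ mcoeffX.
have [m_in | m_notin] := boolP (m \in msupp F).
  rewrite (bigD1_seq m m_in (msupp_uniq F)) /= eqxx mulr1 mulrC.
  by rewrite [X in _ + X]big1 ?addr0 // => u /negbTE ->; rewrite mulr0.
rewrite (memN_msupp_eq0 m_notin) mulr0 big_seq big1 // => u u_in.
by case: eqP u_in m_notin => [-> -> //|_ _ _]; rewrite mulr0.
Qed.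
End Polarization.

Notation xvar n := (@lshift n.+1 n.+1).
Notation yvar n := (@rshift n.+1 n.+1).
Notation lowering n := (polar (yvar n) (xvar n)).
Notation raising n := (polar (xvar n) (yvar n)).
Notation eulerx n := (polar (xvar n) (xvar n)).
Notation eulery n := (polar (yvar n) (yvar n)).

Section Bidegree.
Variables (R : comNzRingType) (n : nat).
Implicit Types (F v : {mpoly R[nvars n]}) (a b : R).

Lemma raising_lowering F :
  raising n (lowering n F) - lowering n (raising n F) = eulerx n F - eulery n F.
Proof.
rewrite polar_commutator /polar -sumrB; apply: eq_bigr => i _.
rewrite sumrB sum_eq_inj_scale ?sum_eq_inj_scale_sym //.
- exact: lshift_inj.
- exact: rshift_inj.
Qed.

Lemma eulerx_lowering F :
  eulerx n (lowering n F) - lowering n (eulerx n F) = - lowering n F.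
Proof.
rewrite polar_commutator /polar -sumrN; apply: eq_bigr => i _.
rewrite sumrB sum_eq_inj_scale_sym; last exact: lshift_inj.
by rewrite big1 ?sub0r // => j _; rewrite eq_rlshift scale0r.
Qed.

Lemma eulery_lowering F :
  eulery n (lowering n F) - lowering n (eulery n F) = lowering n F.
Proof.
rewrite polar_commutator /polar; apply: eq_bigr => i _.
rewrite sumrB sum_eq_inj_scale; last exact: rshift_inj.
by rewrite big1 ?subr0 // => j _; rewrite eq_rlshift scale0r.
Qed.

Lemma eulerx_raising F :
  eulerx n (raising n F) - raising n (eulerx n F) = raising n F.
Proof.
rewrite polar_commutator /polar; apply: eq_bigr => i _.
rewrite sumrB sum_eq_inj_scale; last exact: lshift_inj.
by rewrite big1 ?subr0 // => j _; rewrite eq_lrshift scale0r.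
Qed.

Lemma eulery_raising F :
  eulery n (raising n F) - raising n (eulery n F) = - raising n F.
Proof.
rewrite polar_commutator /polar -sumrN; apply: eq_bigr => i _.
rewrite sumrB sum_eq_inj_scale_sym; last exact: rshift_inj.
by rewrite big1 ?sub0r // => j _; rewrite eq_lrshift scale0r.
Qed.

Definition biweight a b v := eulerx n v = a *: v /\ eulery n v = b *: v.

Lemma in_tensor_biweight (a b : nat) F : in_tensor a b F -> biweight a%:R b%:R F.
Proof.
move=> /allP F_bideg; split; apply/mpolyP => m; rewrite mcoeff_polar_diag mcoeffZ.
  have [/F_bideg/andP[/eqP <- _] // | m_notin] := boolP (m \in msupp F).
  by rewrite (memN_msupp_eq0 m_notin) !mulr0.
have [/F_bideg/andP[_ /eqP <-] // | m_notin] := boolP (m \in msupp F).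
by rewrite (memN_msupp_eq0 m_notin) !mulr0.
Qed.

Lemma biweightB a b u v : biweight a b u -> biweight a b v -> biweight a b (u - v).
Proof. by move=> [ux uy] [vx vy]; split; rewrite linearB /= ?ux ?uy ?vx ?vy scalerBr. Qed.

Lemma biweight_lowering a b v : biweight a b v -> biweight (a - 1) (b + 1) (lowering n v).
Proof.
move=> [vx vy]; split.
  rewrite -[LHS](subrK (lowering n (eulerx n v))) eulerx_lowering vx linearZ /=.
  by rewrite scalerBl scale1r addrC.
rewrite -[LHS](subrK (lowering n (eulery n v))) eulery_lowering vy linearZ /=.
by rewrite scalerDl scale1r addrC.
Qed.

Lemma biweight_raising a b v : biweight a b v -> biweight (a + 1) (b - 1) (raising n v).
Proof.
move=> [vx vy]; split.
  rewrite -[LHS](subrK (raising n (eulerx n v))) eulerx_raising vx linearZ /=.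
  by rewrite scalerDl scale1r addrC.
rewrite -[LHS](subrK (raising n (eulery n v))) eulery_raising vy linearZ /=.
by rewrite scalerBl scale1r addrC.
Qed.

Lemma biweight_iter_lowering a b v j :
  biweight a b v -> biweight (a - j%:R) (b + j%:R) (iter j (lowering n) v).
Proof.
move=> v_wt; elim: j => [|j IHj] /=; first by rewrite !subr0 !addr0.
by rewrite -addn1 natrD opprD !addrA; apply: biweight_lowering.
Qed.

Lemma raising_iter_lowering a b v j : biweight a b v ->
  raising n (iter j.+1 (lowering n) v) =
  iter j.+1 (lowering n) (raising n v) + (j.+1%:R * (a - b - j%:R)) *: iter j (lowering n) v.
Proof.
move=> v_wt; elim: j => [|j IHj].
  rewrite -[LHS](subrK (lowering n (raising n v))) raising_lowering.
  by case: v_wt => -> ->; rewrite -scalerBl mul1r subr0 addrC.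
rewrite -[LHS](subrK (lowering n (raising n (iter j.+1 (lowering n) v)))) raising_lowering.
case: (biweight_iter_lowering j.+1 v_wt) => -> ->.
rewrite IHj linearD !linearZ /= scalerN -scalerBl addrCA -scalerDl; congr (_ + _ *: _).
rewrite -[j.+2]addn1 -[j.+1]addn1 !natrD; ring.
Qed.

Lemma iter_lowering_raising a b v e : biweight a b v ->
  iter e.+1 (lowering n) v = 0 ->
  iter e.+1 (lowering n) (raising n v) =
    - (e.+1%:R * (a - b - e%:R)) *: iter e (lowering n) v.
Proof.
move=> v_wt Lv; have := raising_iter_lowering e v_wt.
by rewrite Lv raddf0 => /eqP; rewrite eq_sym addr_eq0 scaleNr => /eqP.
Qed.
End Bidegree.

Section CharacteristicZero.
Variables (C : numFieldType) (n : nat).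
Implicit Types v : {mpoly C[nvars n]}.

Lemma biweight_neg_eq0 (a b : C) v : b < 0 -> biweight a b v -> v = 0.
Proof.
move=> b_lt0 [_ vy]; apply/mpolyP => m; have := congr1 (mcoeff m) vy.
rewrite mcoeff_polar_diag mcoeffZ mcoeff0 => /eqP.
rewrite -subr_eq0 -mulrBl mulf_eq0 subr_eq0 => /orP[/eqP deg_b | /eqP //].
by move: b_lt0; rewrite -deg_b ltrn0.
Qed.

Lemma iter_lowering_pred (a b e : nat) v : (b + e < a)%N ->
  biweight a%:R b%:R v -> raising n v = 0 ->
  iter e.+1 (lowering n) v = 0 -> iter e (lowering n) v = 0.
Proof.
move=> lt_bea v_wt Rv Lv; have := iter_lowering_raising v_wt Lv.
rewrite Rv iter_raddf0 => /esym/eqP; rewrite scaler_eq0 oppr_eq0 mulf_eq0 pnatr_eq0 /=.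
by rewrite -natrB -?natrB ?pnatr_eq0 => [/orP[/eqP|/eqP] //| |]; lia.
Qed.

Lemma iter_lowering_eq0 (b a e : nat) v : (b + e <= a)%N ->
  biweight a%:R b%:R v -> iter e (lowering n) v = 0 -> v = 0.
Proof.
elim: b a e v => [|b IHb] a e v le_bea v_wt; elim: e le_bea => [//|e IHe] le_bea Lv;
  apply: (IHe _ (iter_lowering_pred _ v_wt _ Lv)); try lia.
- by apply: biweight_neg_eq0 (biweight_raising v_wt); rewrite sub0r oppr_lt0 ltr01.
- apply: (IHb a.+1 e.+2); first lia.
    by have := biweight_raising v_wt; rewrite natr1 -[b.+1]addn1 natrD addrK.
  by rewrite iterS (iter_lowering_raising v_wt Lv) linearZ /= -iterS Lv scaler0.
Qed.

Lemma lowering_eq0_dim1 (v : {mpoly C[nvars 0]}) : lowering 0 v = 0 -> eulerx 0 v = 0.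
Proof.
have X_neq0 (i : 'I_(nvars 0)) : 'X_i != 0 :> {mpoly C[nvars 0]}.
  apply/eqP => /(congr1 (mcoeff U_(i))); rewrite mcoeffX eqxx mcoeff0.
  exact/eqP/oner_neq0.
rewrite /polar !big_ord1 => /eqP; rewrite mulf_eq0 (negbTE (X_neq0 _)) => /eqP ->.
by rewrite mulr0.
Qed.

Lemma iter_lowering_eq0_dim1 (e a b : nat) (v : {mpoly C[nvars 0]}) : (e <= a)%N ->
  biweight a%:R b%:R v -> iter e (lowering 0) v = 0 -> v = 0.
Proof.
elim: e a b v => [//|e IHe] a b v le_ea v_wt; rewrite iterSr => Lv.
have Lv_wt : biweight a.-1%:R b.+1%:R (lowering 0 v).
  by rewrite -natr1 -subn1 natrB; [apply: biweight_lowering | lia].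
have /lowering_eq0_dim1 : lowering 0 v = 0 by apply: (IHe _ _ _ _ Lv_wt Lv); lia.
case: v_wt => -> _ /eqP; rewrite scaler_eq0 pnatr_eq0 => /orP[/eqP|/eqP //]; lia.
Qed.
End CharacteristicZero.

Lemma dvdn_prod_fact_sum m (f : 'I_m -> nat) :
  (\prod_(i < m) (f i)`! %| (\sum_(i < m) f i)`!)%N.
Proof.
elim: m f => [|m IHm] f; first by rewrite !big_ord0.
rewrite !big_ord_recr /=; set a := (\sum_(i < m) _)%N; set b := f ord_max.
have := bin_fact (leq_addr b a); rewrite addKn => <-.
exact/dvdn_mull/dvdn_mul.
Qed.

Lemma multinomialK n e (I : 'X_{1..n.+1}) :
  mdeg I = e -> (multinomial e I * \prod_(i < n.+1) (I i)`!)%N = e`!.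
Proof. by move=> <-; rewrite /multinomial divnK // mdegE dvdn_prod_fact_sum. Qed.

Lemma mdeg_sub1 n (J : 'X_{1..n}) j : J j != 0%N -> mdeg J = (mdeg (J - U_(j))%MM).+1.
Proof. by rewrite -lep1mP => /submK J_eq; rewrite -{1}J_eq mdegD mdeg1 addn1. Qed.

Lemma prod_fact_sub1 n (J : 'X_{1..n}) j : J j != 0%N ->
  (\prod_(i < n) ((J - U_(j))%MM i)`! * J j)%N = (\prod_(i < n) (J i)`!)%N.
Proof.
move=> Jj_neq0; rewrite (bigD1 j) // [RHS](bigD1 j) //= mnmBE mnm1E eqxx.
rewrite (eq_bigr (fun i => (J i)`!)) => [|i ne_ij]; last first.
  by rewrite mnmBE mnm1E eq_sym (negbTE ne_ij) subn0.
by case: (J j) Jj_neq0 => // s _; rewrite subn1 /= factS; lia.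
Qed.

Lemma multinomialS n e (J : 'X_{1..n.+1}) : mdeg J = e.+1 ->
  (\sum_(j < n.+1) (J j != 0%N) * multinomial e (J - U_(j)))%N = multinomial e.+1 J.
Proof.
move=> degJ; apply/eqP.
have prod_gt0 : (0 < \prod_(i < n.+1) (J i)`!)%N by apply/prodn_gt0 => i; apply: fact_gt0.
rewrite -(eqn_pmul2r prod_gt0) multinomialK // big_distrl /=.
rewrite (eq_bigr (fun j => e`! * J j)%N) => [|j _].
  by rewrite -big_distrr /= -mdegE degJ factS mulnC.
have [Jj_neq0|/negPn/eqP ->] := boolP (J j != 0%N); last by rewrite muln0.
rewrite mul1n -(prod_fact_sub1 Jj_neq0) mulnA multinomialK //.
by apply/eqP; rewrite -eqSS -mdeg_sub1 // degJ.
Qed.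

Section Eta.
Variables (R : comNzRingType) (n : nat).
Implicit Types (F : {mpoly R[nvars n]}) (I J : 'X_{1..n.+1}).

Lemma xmon0 : xmon (0%MM : 'X_{1..n.+1}) = 0%MM.
Proof. by apply/mnmP => i; rewrite !mnmE; case: split => j; rewrite ?mnmE. Qed.

Lemma ymon0 : ymon (0%MM : 'X_{1..n.+1}) = 0%MM.
Proof. by apply/mnmP => i; rewrite !mnmE; case: split => j; rewrite ?mnmE. Qed.

Lemma xmonD I J : xmon (I + J)%MM = (xmon I + xmon J)%MM.
Proof. by apply/mnmP => i; rewrite mnmDE !mnmE; case: split => // j; rewrite mnmDE. Qed.

Lemma ymonD I J : ymon (I + J)%MM = (ymon I + ymon J)%MM.
Proof. by apply/mnmP => i; rewrite mnmDE !mnmE; case: split => // j; rewrite mnmDE. Qed.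

Lemma xmonU (j : 'I_n.+1) : xmon U_(j)%MM = U_(xvar n j)%MM.
Proof.
apply/mnmP => i; rewrite -(splitK i) mnmE unsplitK mnm1E.
by case: (split i) => l /=; rewrite ?mnm1E ?eq_lshift ?eq_lrshift.
Qed.

Lemma ymonU (j : 'I_n.+1) : ymon U_(j)%MM = U_(yvar n j)%MM.
Proof.
apply/mnmP => i; rewrite -(splitK i) mnmE unsplitK mnm1E.
by case: (split i) => l /=; rewrite ?mnm1E ?eq_rshift ?eq_rlshift.
Qed.

Lemma ymon_xvar I (j : 'I_n.+1) : ymon I (xvar n j) = 0%N.
Proof. by rewrite mnmE (unsplitK (inl _)). Qed.

Definition eta_term F I := 'X_[ymon I] * mderivm (xmon I) F.

Lemma eta_opE e F :
  eta_op e F = \sum_(I : 'X_{1..n.+1 < e.+1} | mdeg I == e) (multinomial e I)%:R *: eta_term F I.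
Proof. by []. Qed.

Lemma lowering_eta_term F I :
  lowering n (eta_term F I) = \sum_(j < n.+1) eta_term F (I + U_(j))%MM.
Proof.
apply: eq_bigr => j _; rewrite /eta_term mderivM mderivX ymon_xvar scale0r mul0r add0r.
rewrite mulrA -mpolyXD ymonD ymonU addmC xmonD xmonU.
by rewrite mderivmDm mderivmU1m.
Qed.

Lemma big_mdeg_addU1 (V : zmodType) e (j : 'I_n.+1) (G : 'X_{1..n.+1} -> V) :
  \sum_(I : 'X_{1..n.+1 < e.+1} | mdeg I == e) G (I + U_(j))%MM =
  \sum_(J : 'X_{1..n.+1 < e.+2} | (mdeg J == e.+1) && (J j != 0%N)) G J.
Proof.
have addU1_lt (I : 'X_{1..n.+1 < e.+1}) : (mdeg (I + U_(j))%MM < e.+2)%N.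
  by rewrite mdegD mdeg1 addn1 ltnS bmdeg.
pose sub1 (J : 'X_{1..n.+1 < e.+2}) : 'X_{1..n.+1 < e.+1} := insubd bm0 (J - U_(j))%MM.
rewrite (reindex_onto sub1 (fun I : 'X_{1..n.+1 < e.+1} => BMultinom (addU1_lt I))) /=; last first.
  by move=> I _ /=; apply/val_inj; rewrite /sub1 /= addmK insubdK //; apply: bmdeg.
apply: eq_big => J; last by move=> /andP[_ /eqP/(congr1 val) <-].
apply/andP/andP => [[/eqP degJ /eqP/(congr1 val) /= J_eq] | [/eqP degJ Jj_neq0]].
  by rewrite -J_eq mdegD mdeg1 degJ addn1 mnmDE mnm1E !eqxx addn_eq0 /= andbF.
have degJU : mdeg (J - U_(j))%MM = e by apply/eqP; rewrite -eqSS -mdeg_sub1 // degJ.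
have sub1E : sub1 J = (J - U_(j))%MM :> 'X_{1..n.+1}.
  by rewrite /sub1 insubdK // unfold_in /= degJU.
by split; [rewrite sub1E degJU | apply/eqP/val_inj; rewrite /= sub1E submK // lep1mP].
Qed.

Lemma eta_opS e F : eta_op e.+1 F = lowering n (eta_op e F).
Proof.
rewrite !eta_opE linear_sum /=.
under [RHS]eq_bigr => I _ do rewrite linearZ /= lowering_eta_term scaler_sumr.
rewrite exchange_big /=.
under [RHS]eq_bigr => j _.
  under eq_bigr => I _ do rewrite -[in X in multinomial e X](addmK U_(j)%MM I).
  rewrite (big_mdeg_addU1 e j (fun J => (multinomial e (J - U_(j))%MM)%:R *: eta_term F J)).
  rewrite big_mkcondr /=.
  over.
rewrite /= exchange_big /=; apply: eq_bigr => J /eqP degJ.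
rewrite -(multinomialS degJ) natr_sum scaler_suml; apply: eq_bigr => j _.
by case: (J j != 0%N); rewrite ?mul1n ?mul0n ?scale0r.
Qed.

Lemma eta_op_iter e F : eta_op e F = iter e (lowering n) F.
Proof.
elim: e => [|e IHe]; last by rewrite eta_opS IHe.
rewrite eta_opE (big_pred1 bm0) => [|I]; last by rewrite /= mdeg_eq0 bmeqP.
rewrite /eta_term /= xmon0 ymon0 mpolyX0 mul1r mderivm0m /multinomial big1 ?divnn ?scale1r //.
by move=> i _; rewrite mnm0E.
Qed.
End Eta.

Lemma iter_lowering_eq0_bidim (C : numFieldType) n h k d (v : {mpoly C[nvars n]}) :
  (h < k)%N -> (k <= d)%N -> (bidim n d k <= bidim n d h)%N ->
  biweight k%:R (d - k)%:R v -> iter (k - h) (lowering n) v = 0 -> v = 0.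
Proof.
case: n v => [|n] v lt_hk le_kd dim_le v_wt Lv.
  exact: iter_lowering_eq0_dim1 (leq_subr h k) v_wt Lv.
apply: iter_lowering_eq0 v_wt Lv.
by have := bidim_le_bound (ltn0Sn n) lt_hk le_kd dim_le; lia.
Qed.

Theorem proposition5p1 (R : realType) (n h k d : nat) :
  (h < k)%N -> (k <= d)%N ->
  ('C(n + k, n) * 'C(n + (d - k), n) <= 'C(n + h, n) * 'C(n + (d - h), n))%N ->
  {in [pred F : {mpoly R[i][nvars n]} | in_tensor k (d - k)%N F] &,
     injective (@eta_op R[i] n (k - h)%N)}.
Proof.
move=> lt_hk le_kd dim_le F G; rewrite !inE.
move=> /in_tensor_biweight F_wt /in_tensor_biweight G_wt eta_eq.
apply/eqP; rewrite -subr_eq0; apply/eqP.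
apply: iter_lowering_eq0_bidim lt_hk le_kd dim_le (biweightB F_wt G_wt) _.
by rewrite iter_raddfB -!eta_op_iter eta_eq subrr.
Qed.
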